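(* Let $M$ be a smooth manifold and $g_1,g_2$ Riemannian metrics on $M$. For $p\in M$ write $\|\cdot\|_i^{(p)}$ for the norm on $T_pM$ induced by $(g_i)_p$. The following are equivalent: (1) $g_1$ and $g_2$ are roughly conformal, i.e. there is a function (not necessarily continuous) $h:M\to(0,\infty)$ with $(g_2)_p=h(p)(g_1)_p$ for every $p\in M$; (2) there is a function (not necessarily continuous) $f:M\to(0,\infty)$ such that $\|\cdot\|_1^{(p)}=f(p)\|\cdot\|_2^{(p)}$ on $T_pM$ for each $p\in M$; (3) for each $p\in M$, $(g_1)_p$ and $(g_2)_p$ give the same angle between every pair of nonzero vectors in $T_pM$; (4) for each $p\in M$ and all nonzero $v,w\in T_pM$, $(g_1)_p(v,w)=0\iff(g_2)_p(v,w)=0$; (5) for each $p\in M$ there is $\theta_0\in(0,\pi)$ such that for all nonzero $v,w\in T_pM$, the angle between $v,w$ with respect to $(g_1)_p$ is $\theta_0$ iff the angle between them with respect to $(g_2)_p$ is $\theta_0$.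
   Context: For an inner product $g$ on a real vector space, the angle between nonzero vectors $v,w$ is the unique $\theta\in[0,\pi]$ with $\cos\theta=g(v,w)/(\sqrt{g(v,v)}\sqrt{g(w,w)})$. *)

From HB Require Import structures.
From mathcomp Require Import all_boot all_order all_algebra.
From mathcomp Require Import all_classical all_reals all_analysis.
Set Implicit Arguments. Unset Strict Implicit. Unset Printing Implicit Defensive.
Import Order.TTheory GRing.Theory Num.Theory.
Local Open Scope ring_scope.

Definition is_inner_prod (R : realType) (V : vectType R) (g : V -> V -> R) : Prop :=
  [/\ (forall v w, g v w = g w v),
      (forall a u v w, g (a *: u + v) w = a * g u w + g v w)
    & (forall v, v != 0 -> 0 < g v v)].

Definition ip_norm (R : realType) (V : vectType R) (g : V -> V -> R) (v : V) : R :=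
  Num.sqrt (g v v).

Definition ip_angle (R : realType) (V : vectType R) (g : V -> V -> R) (v w : V) : R :=
  acos (g v w / (Num.sqrt (g v v) * Num.sqrt (g w w))).

(* Everything is pointwise in [p], so it suffices to compare two inner products
   [g1], [g2] on one space.  A conformal factor cancels in cosines, so angles are
   preserved, and preserving a single angle in (0, pi) already forces orthogonality
   to be preserved.  If orthogonality is preserved, projecting [w] onto [u] gives
   [g2 u w = l(u) g1 u w], and the symmetry of [g2] makes [l] constant.
   Proportional norms give conformality by polarization. *)

From HB Require Import structures.
From mathcomp Require Import all_boot all_order all_algebra.
From mathcomp Require Import all_classical all_reals all_analysis.
From mathcomp Require Import ring lra.
Import Order.TTheory GRing.Theory Num.Theory.
Local Open Scope ring_scope.

Definition ip_cos {R : realType} {V : vectType R} (g : V -> V -> R) (v w : V) : R :=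
  g v w / (ip_norm g v * ip_norm g w).

Section InnerProduct.
Context {R : realType} {V : vectType R} {g : V -> V -> R}.
Hypothesis hg : is_inner_prod g.

Lemma ipC v w : g v w = g w v. Proof. by case: hg. Qed.

Lemma ip_gt0 {v} : v != 0 -> 0 < g v v. Proof. by case: hg => _ _; apply. Qed.

Lemma ip0l w : g 0 w = 0.
Proof.
case: hg => _ lin _; have := lin 1 0 0 w.
by rewrite scaler0 addr0 mul1r => ?; lra.
Qed.

Lemma ipDl u v w : g (u + v) w = g u w + g v w.
Proof. by case: hg => _ lin _; rewrite -[u]scale1r lin mul1r scale1r. Qed.

Lemma ipZl a u w : g (a *: u) w = a * g u w.
Proof. by case: hg => _ lin _; rewrite -[a *: u]addr0 lin ip0l addr0. Qed.

Lemma ipNl u w : g (- u) w = - g u w.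
Proof. by rewrite -scaleN1r ipZl mulN1r. Qed.

Lemma ip0r w : g w 0 = 0. Proof. by rewrite ipC ip0l. Qed.

Lemma ipDr u v w : g w (u + v) = g w u + g w v.
Proof. by rewrite ipC ipDl !(ipC _ w). Qed.

Lemma ipZr a u w : g w (a *: u) = a * g w u.
Proof. by rewrite ipC ipZl ipC. Qed.

Lemma ipNr u w : g w (- u) = - g w u.
Proof. by rewrite ipC ipNl ipC. Qed.

Lemma ip_ge0 v : 0 <= g v v.
Proof. by have [->|/ip_gt0/ltW] := eqVneq v 0; rewrite ?ip0l. Qed.

Lemma ip_norm_gt0 {v} : v != 0 -> 0 < ip_norm g v.
Proof. by move=> /ip_gt0; rewrite sqrtr_gt0. Qed.

Lemma sqr_ip_norm v : ip_norm g v ^+ 2 = g v v.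
Proof. exact/sqr_sqrtr/ip_ge0. Qed.

Lemma cauchy_schwarz v w : g v w ^+ 2 <= g v v * g w w.
Proof.
have [->|/ip_gt0 vv_gt0] := eqVneq v 0; first by rewrite ip0l expr0n /= mulr_ge0 ?ip_ge0.
set t := g v w / g v v.
have := ip_ge0 (w - t *: v).
rewrite !(ipDl, ipDr, ipNl, ipNr, ipZl, ipZr) (ipC w v).
have : t * g v v = g v w by rewrite divfK ?gt_eqF.
nra.
Qed.

Lemma ip_cosE {v w} : v != 0 -> w != 0 ->
  g v w = ip_cos g v w * (ip_norm g v * ip_norm g w).
Proof. by move=> /ip_norm_gt0 ? /ip_norm_gt0 ?; rewrite divfK // mulf_neq0 ?gt_eqF. Qed.

Lemma ip_cos_bound {v w} : v != 0 -> w != 0 -> -1 <= ip_cos g v w <= 1.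
Proof.
move=> v0 w0; have := cauchy_schwarz v w; rewrite (ip_cosE v0 w0).
have n_gt0 : 0 < ip_norm g v * ip_norm g w by rewrite mulr_gt0 ?ip_norm_gt0.
rewrite -!sqr_ip_norm -exprMn [X in X <= _]exprMn -[X in _ <= X]mul1r.
by rewrite ler_pM2r ?exprn_gt0 // => ?; apply/andP; split; nra.
Qed.

Lemma ip_angle_cos {v w t} : v != 0 -> w != 0 -> 0 <= t <= pi ->
  ip_angle g v w = t <-> ip_cos g v w = cos t.
Proof.
move=> v0 w0 t_0pi; rewrite /ip_angle -/(ip_cos g v w); split=> [<-|->].
- by rewrite acosK // in_itv /= ip_cos_bound.
- by rewrite cosK.
Qed.

Lemma ip_cos_orthogonal_combination {u w a b} :
  u != 0 -> w != 0 -> g u w = 0 -> a ^+ 2 + b ^+ 2 = 1 ->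
  let x := (a * ip_norm g w) *: u + (b * ip_norm g u) *: w in
  x != 0 /\ ip_cos g u x = a.
Proof.
move=> u0 w0 uw0 ab1 x; have p_gt0 := ip_norm_gt0 u0; have q_gt0 := ip_norm_gt0 w0.
have xx : g x x = (ip_norm g u * ip_norm g w) ^+ 2.
  rewrite !(ipDl, ipDr, ipZl, ipZr) (ipC w u) uw0 -!sqr_ip_norm.
  by rewrite -[RHS]mul1r -ab1; ring.
have x_norm : ip_norm g x = ip_norm g u * ip_norm g w.
  by rewrite /ip_norm xx sqrtr_sqr ger0_norm // mulr_ge0 ?ltW.
split.
  apply/eqP => x0; move/eqP: xx; rewrite x0 ip0l eq_sym sqrf_eq0.
  by rewrite mulf_eq0 !gt_eqF.
rewrite /ip_cos x_norm !(ipDr, ipZr) uw0 -sqr_ip_norm.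
by field; rewrite !gt_eqF.
Qed.

End InnerProduct.

Section Comparison.
Context {R : realType} {V : vectType R}.

Definition ip_conformal (g1 g2 : V -> V -> R) :=
  exists h : R, 0 < h /\ forall v w : V, g2 v w = h * g1 v w.

Definition ip_norm_proportional (g1 g2 : V -> V -> R) :=
  exists f : R, 0 < f /\ forall v : V, ip_norm g1 v = f * ip_norm g2 v.

Definition ip_same_angles (g1 g2 : V -> V -> R) :=
  forall v w : V, v != 0 -> w != 0 -> ip_angle g1 v w = ip_angle g2 v w.

Definition ip_same_orthogonality (g1 g2 : V -> V -> R) :=
  forall v w : V, v != 0 -> w != 0 -> (g1 v w = 0 <-> g2 v w = 0).

Definition ip_same_angle_at (g1 g2 : V -> V -> R) (t : R) :=
  forall v w : V, v != 0 -> w != 0 -> (ip_angle g1 v w = t <-> ip_angle g2 v w = t).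

End Comparison.

Section AngleToOrthogonality.
Context {R : realType} {V : vectType R} {g1 g2 : V -> V -> R}.
Hypotheses (hg1 : is_inner_prod g1) (hg2 : is_inner_prod g2).

(* For [u ⟂ w], the vectors [cos t |w| u ± sin t |u| w] make angle [t] with [u];
   comparing the two resulting identities for [g2] forces [g2 u w = 0]. *)
Lemma angle_to_orthogonal {t} : 0 < t < pi ->
    (forall v w : V, v != 0 -> w != 0 -> ip_angle g1 v w = t -> ip_angle g2 v w = t) ->
  forall u w : V, u != 0 -> w != 0 -> g1 u w = 0 -> g2 u w = 0.
Proof.
move=> t_0pi angle12 u w u0 w0 uw0.
have t_cc : 0 <= t <= pi by case/andP: t_0pi => *; rewrite !ltW.
have sin_gt0 := sin_gt0_pi t_0pi.
have p_gt0 := ip_norm_gt0 hg1 u0; have q_gt0 := ip_norm_gt0 hg1 w0.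
have al_gt0 := ip_gt0 hg2 u0.
set a := cos t; set p := ip_norm g1 u; set q := ip_norm g1 w.
set al := g2 u u; set be := g2 u w; set ga := g2 w w.
have key s : a ^+ 2 + s ^+ 2 = 1 ->
    (a * q * al + s * p * be) ^+ 2
    = a ^+ 2 * (al * (a ^+ 2 * q ^+ 2 * al + 2 * a * q * s * p * be + s ^+ 2 * p ^+ 2 * ga)).
  move=> as1; have [] := ip_cos_orthogonal_combination hg1 u0 w0 uw0 as1.
  set x := _ + _ => x0 cos1.
  have /(ip_angle_cos hg2 u0 x0 t_cc) cos2 : ip_angle g2 u x = t.
    by apply: angle12 => //; apply/(ip_angle_cos hg1 u0 x0 t_cc).
  have := ip_cosE hg2 u0 x0; rewrite cos2 -/a => /(congr1 (fun r => r ^+ 2)).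
  rewrite exprMn exprMn !(sqr_ip_norm hg2) /x.
  rewrite !(ipDl hg2, ipDr hg2, ipZl hg2, ipZr hg2) (ipC hg2 w u) => ->.
  rewrite /a /al /be /ga /p /q; ring.
have sin2 : a ^+ 2 + sin t ^+ 2 = 1 := cos2Dsin2 t.
have Ep := key _ sin2; have := key (- sin t); rewrite sqrrN => /(_ sin2) Em.
have : a * be * (4 * q * al * sin t * p * (1 - a ^+ 2)) = 0 by lra.
rewrite (_ : 1 - a ^+ 2 = sin t ^+ 2); last by lra.
have nz : 4 * q * al * sin t * p * sin t ^+ 2 != 0.
  by rewrite !mulf_neq0 ?expf_neq0 ?gt_eqF.
move/eqP; rewrite mulf_eq0 (negbTE nz) orbF mulf_eq0 => /orP [/eqP a0|/eqP //].
move: Ep; rewrite a0 expr0n /= !mul0r !add0r => /eqP; rewrite sqrf_eq0.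
by rewrite !mulf_eq0 (gt_eqF sin_gt0) (gt_eqF p_gt0) => /eqP.
Qed.

End AngleToOrthogonality.

Section TwoInnerProducts.
Context {R : realType} {V : vectType R} {g1 g2 : V -> V -> R}.
Hypotheses (hg1 : is_inner_prod g1) (hg2 : is_inner_prod g2).

Lemma conformal_ip_cos : ip_conformal g1 g2 -> ip_cos g2 =2 ip_cos g1.
Proof.
case=> h [h_gt0 g21] v w; rewrite /ip_cos /ip_norm !g21 !sqrtrM ?ltW //.
rewrite -{1}(sqr_sqrtr (ltW h_gt0)) mulrACA -expr2 invfM mulrACA.
by rewrite mulfV ?mul1r // expf_neq0 // gt_eqF // sqrtr_gt0.
Qed.

Lemma conformal_same_angles : ip_conformal g1 g2 -> ip_same_angles g1 g2.
Proof.
by move=> /conformal_ip_cos cos21 v w _ _; rewrite /ip_angle -!/(ip_cos _ v w) cos21.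
Qed.

Lemma conformal_norm_proportional : ip_conformal g1 g2 -> ip_norm_proportional g1 g2.
Proof.
case=> h [h_gt0 g21]; exists (Num.sqrt h)^-1; split; first by rewrite invr_gt0 sqrtr_gt0.
by move=> v; rewrite /ip_norm g21 sqrtrM ?ltW // mulKf // gt_eqF // sqrtr_gt0.
Qed.

Lemma norm_proportional_conformal : ip_norm_proportional g1 g2 -> ip_conformal g1 g2.
Proof.
move=> [f [f_gt0 norm12]]; have f2_gt0 : 0 < f ^+ 2 by rewrite exprn_gt0.
have diag v : g1 v v = f ^+ 2 * g2 v v.
  by rewrite -(sqr_ip_norm hg1) -(sqr_ip_norm hg2) norm12 exprMn.
exists (f ^+ 2)^-1; split=> [|v w]; first by rewrite invr_gt0.
have := diag (v + w); rewrite !(ipDl hg1, ipDr hg1, ipDl hg2, ipDr hg2) !diag.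
rewrite (ipC hg1 w v) (ipC hg2 w v) => polar.
have -> : g1 v w = f ^+ 2 * g2 v w by lra.
by rewrite mulKf ?gt_eqF.
Qed.

Section SameOrthogonality.
Hypothesis orth12 : ip_same_orthogonality g1 g2.

(* [w - (g1 u w / g1 u u) u] is [g1]-orthogonal to [u], hence [g2]-orthogonal to it. *)
Lemma same_orthogonality_ratio u w : u != 0 -> g2 u w = g2 u u / g1 u u * g1 u w.
Proof.
move=> u0; have uu_gt0 := ip_gt0 hg1 u0.
set c := g1 u w / g1 u u.
have w'_orth : g2 u (w - c *: u) = 0.
  have [->|w'0] := eqVneq (w - c *: u) 0; first exact: ip0r.
  apply/(orth12 _ _ u0 w'0).
  by rewrite (ipDr hg1) (ipNr hg1) (ipZr hg1) /c divfK ?gt_eqF // subrr.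
move: w'_orth; rewrite (ipDr hg2) (ipNr hg2) (ipZr hg2) /c => /eqP.
by rewrite subr_eq0 => /eqP ->; rewrite mulrAC [RHS]mulrC mulrA.
Qed.

Lemma same_orthogonality_ratio_const {u u'} : u != 0 -> u' != 0 ->
  g2 u u / g1 u u = g2 u' u' / g1 u' u'.
Proof.
have ratio_eq v v' : v != 0 -> v' != 0 -> g1 v v' != 0 ->
    g2 v v / g1 v v = g2 v' v' / g1 v' v'.
  move=> v0 v'0 vv'0; apply: (mulIf vv'0).
  by rewrite -same_orthogonality_ratio // (ipC hg1) (ipC hg2) -same_orthogonality_ratio.
move=> u0 u'0; have [uu'0|] := eqVneq (g1 u u') 0; last exact: ratio_eq.
(* otherwise pass through [u + u'], which is [g1]-orthogonal to neither *)
have [uu_gt0 u'u'_gt0] := (ip_gt0 hg1 u0, ip_gt0 hg1 u'0).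
have sum0 : u + u' != 0.
  apply/negP; rewrite addr_eq0 => /eqP uE; move/eqP: uu'0.
  by rewrite uE (ipNl hg1) oppr_eq0 gt_eqF.
rewrite (ratio_eq u (u + u')) ?(ratio_eq u' (u + u')) //.
- by rewrite (ipDr hg1) (ipC hg1 u' u) uu'0 add0r gt_eqF.
- by rewrite (ipDr hg1) uu'0 addr0 gt_eqF.
Qed.

Lemma same_orthogonality_conformal : ip_conformal g1 g2.
Proof.
have [[u0 u0_neq0]|V0] := pselect (exists u : V, u != 0); last first.
  exists 1; split=> // v w; have -> : v = 0 by apply: contra_notP V0 => /eqP v0; exists v.
  by rewrite (ip0l hg1) (ip0l hg2) mulr0.
exists (g2 u0 u0 / g1 u0 u0); split; first by rewrite divr_gt0 ?ip_gt0.
move=> v w; have [->|v0] := eqVneq v 0; first by rewrite (ip0l hg1) (ip0l hg2) mulr0.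
by rewrite same_orthogonality_ratio // (same_orthogonality_ratio_const v0 u0_neq0).
Qed.

End SameOrthogonality.
End TwoInnerProducts.

Lemma same_angle_at_orthogonality {R : realType} {V : vectType R} {g1 g2 : V -> V -> R} t :
    is_inner_prod g1 -> is_inner_prod g2 ->
  0 < t < pi -> ip_same_angle_at g1 g2 t -> ip_same_orthogonality g1 g2.
Proof.
move=> hg1 hg2 t_0pi same v w v0 w0; split.
- by apply: (angle_to_orthogonal hg1 hg2 t_0pi) => // ? ? ? ? /same ->.
- by apply: (angle_to_orthogonal hg2 hg1 t_0pi) => // ? ? ? ? /same <-.
Qed.

Lemma ip_conformal_tfae {R : realType} {V : vectType R} {g1 g2 : V -> V -> R} :
    is_inner_prod g1 -> is_inner_prod g2 ->
  [/\ ip_conformal g1 g2 <-> ip_norm_proportional g1 g2,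
      ip_conformal g1 g2 <-> ip_same_angles g1 g2,
      ip_conformal g1 g2 <-> ip_same_orthogonality g1 g2
    & ip_conformal g1 g2 <-> exists t, 0 < t < pi /\ ip_same_angle_at g1 g2 t].
Proof.
move=> hg1 hg2.
have same_angles_at : ip_same_angles g1 g2 -> exists t, 0 < t < pi /\ ip_same_angle_at g1 g2 t.
  move=> same; exists (pi / 2); split=> [|v w v0 w0]; last by rewrite same.
  by have pi_gt0 := @pi_gt0 R; apply/andP; split; lra.
have same_angle_at_conformal : (exists t, 0 < t < pi /\ ip_same_angle_at g1 g2 t) -> ip_conformal g1 g2.
  case=> t [t_0pi same]; apply: (same_orthogonality_conformal hg1 hg2).
  exact: same_angle_at_orthogonality hg1 hg2 t_0pi same.
split; split.
- exact: conformal_norm_proportional.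
- exact: norm_proportional_conformal.
- exact: conformal_same_angles.
- by move/same_angles_at.
- move=> /conformal_same_angles/same_angles_at [t [t_0pi same]].
  exact: same_angle_at_orthogonality hg1 hg2 t_0pi same.
- exact: same_orthogonality_conformal.
- by move/conformal_same_angles.
- exact: same_angle_at_conformal.
Qed.

Lemma choice_iff {M T : Type} (P : M -> T -> Prop) :
  (exists f : M -> T, forall p, P p (f p)) <-> (forall p, exists t, P p t).
Proof.
split=> [[f Pf] p|]; first by exists (f p).
by move=> /choice [f Pf]; exists f.
Qed.

Theorem mainTheorem12 (R : realType) (M : Type) (V : M -> vectType R)
    (g1 g2 : forall p : M, V p -> V p -> R)
    (hg1 : forall p, is_inner_prod (g1 p)) (hg2 : forall p, is_inner_prod (g2 p)) :
  let C1 := exists h : M -> R, forall p, 0 < h p /\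
              forall v w : V p, g2 p v w = h p * g1 p v w in
  let C2 := exists f : M -> R, forall p, 0 < f p /\
              forall v : V p, ip_norm (g1 p) v = f p * ip_norm (g2 p) v in
  let C3 := forall p (v w : V p), v != 0 -> w != 0 ->
              ip_angle (g1 p) v w = ip_angle (g2 p) v w in
  let C4 := forall p (v w : V p), v != 0 -> w != 0 ->
              (g1 p v w = 0 <-> g2 p v w = 0) in
  let C5 := forall p, exists theta0 : R, 0 < theta0 < pi /\
              forall v w : V p, v != 0 -> w != 0 ->
                (ip_angle (g1 p) v w = theta0 <-> ip_angle (g2 p) v w = theta0) in
  [/\ C1 <-> C2, C1 <-> C3, C1 <-> C4 & C1 <-> C5].
Proof.
move=> C1 C2 C3 C4 C5.
have C1E : C1 <-> forall p, ip_conformal (g1 p) (g2 p) := choice_iff _.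
have C2E : C2 <-> forall p, ip_norm_proportional (g1 p) (g2 p) := choice_iff _.
have tfae p := ip_conformal_tfae (hg1 p) (hg2 p).
split; apply: (iff_trans C1E).
- apply: (iff_trans _ (iff_sym C2E)).
  by split=> H p; have [iff_norm _ _ _] := tfae p; exact/iff_norm/H.
- by split=> H p; have [_ iff_angles _ _] := tfae p; exact/iff_angles/H.
- by split=> H p; have [_ _ iff_orth _] := tfae p; exact/iff_orth/H.
- by split=> H p; have [_ _ _ iff_angle] := tfae p; exact/iff_angle/H.
Qed.
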